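(* Let $\mathcal{G}=\{G_1,\dots,G_M\}$ be groups with $G_i\subseteq[p]$ and $\bigcup_i G_i=[p]$. Let $\vec g\in\mathbb{R}^p$, let $\tilde k$ and $k$ be positive integers, let $\hat{\vec u}$ be the output of the Greedy Projection algorithm applied to $\vec g$ with target group sparsity $\tilde k$, and let $\vec u_*=P_k^{\mathcal{G}}(\vec g)$. Then \[ \|\hat{\vec u}-\vec g\|_2^2\le e^{-\tilde k/k}\,\|\vec g_{\operatorname{supp}(\vec u_* )}\|_2^2+\|\vec u_*-\vec g\|_2^2 , \] where $e$ is the base of the natural logarithm.
   Context: For $\vec w\in\mathbb{R}^p$ and $S\subseteq[p]$, $\vec w_S$ is the vector that agrees with $\vec w$ on $S$ and is $0$ outside $S$. The group-$\ell_0$ pseudo-norm $\|\vec w\|_0^{\mathcal{G}}$ is the minimum, over all decompositions $\vec w=\sum_{i=1}^M \vec a_{G_i}$ with $\operatorname{supp}(\vec a_{G_i})\subseteq G_i$, of the number of indices $i$ with $\vec a_{G_i}\neq 0$. The exact projection is $P_k^{\mathcal{G}}(\vec g)=\arg\min_{\vec w}\|\vec w-\vec g\|_2^2$ subject to $\|\vec w\|_0^{\mathcal{G}}\le k$. The Greedy Projection algorithm with input $\vec g$ and parameter $\tilde k$: set $\vec u=0$, $\vec v=\vec g$, $\widehat{\mathcal{G}}=\emptyset$; for $t=1,\dots,\tilde k$: choose $G^\star=\arg\max_{G\in\mathcal{G}\setminus\widehat{\mathcal{G}}}\|\vec v_G\|_2$, set $\widehat{\mathcal{G}}=\widehat{\mathcal{G}}\cup\{G^\star\}$,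 $\vec u=\vec u+\vec v_{G^\star}$, $\vec v=\vec v-\vec v_{G^\star}$; output $\hat{\vec u}=\vec u$ (so $\hat{\vec u}$ equals $\vec g$ on the union of the selected groups and $0$ elsewhere). *)

From HB Require Import structures.
From mathcomp Require Import all_boot all_order all_algebra.
From mathcomp Require Import reals sequences exp.
Set Implicit Arguments. Unset Strict Implicit. Unset Printing Implicit Defensive.
Import Order.TTheory GRing.Theory Num.Theory.
Local Open Scope ring_scope.

Definition sqnorm (R : realType) (p : nat) (w : 'I_p -> R) : R :=
  \sum_(j < p) w j ^+ 2.

Definition restr (R : realType) (p : nat) (S : {set 'I_p}) (w : 'I_p -> R)
  : 'I_p -> R := fun j => if j \in S then w j else 0.

Definition supp (R : realType) (p : nat) (w : 'I_p -> R) : {set 'I_p} :=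
  [set j | w j != 0].

(* ||w||_0^G <= k : there is a decomposition w = sum_i a_{G_i},
   supp a_{G_i} ⊆ G_i, with at most k nonzero parts. *)
Definition group_l0_le (R : realType) (p M : nat) (G : 'I_M -> {set 'I_p})
  (w : 'I_p -> R) (k : nat) : Prop :=
  exists a : 'I_M -> 'I_p -> R,
    (forall i j, j \notin G i -> a i j = 0) /\
    (forall j, w j = \sum_(i < M) a i j) /\
    (#|[set i | [exists j, a i j != 0%R]]| <= k)%N.

Definition is_group_proj (R : realType) (p M : nat) (G : 'I_M -> {set 'I_p})
  (k : nat) (g u : 'I_p -> R) : Prop :=
  group_l0_le G u k /\
  forall w, group_l0_le G w k ->
    sqnorm (fun j => u j - g j) <= sqnorm (fun j => w j - g j).

Definition greedy_step (R : realType) (p M : nat) (G : 'I_M -> {set 'I_p})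
  (st : ('I_p -> R) * ('I_p -> R)) (i : 'I_M) :=
  let: (u, v) := st in
  (fun j => u j + restr (G i) v j, fun j => v j - restr (G i) v j).

Definition greedy_state (R : realType) (p M : nat) (G : 'I_M -> {set 'I_p})
  (g : 'I_p -> R) (s : seq 'I_M) : ('I_p -> R) * ('I_p -> R) :=
  foldl (greedy_step G) (fun _ => 0, g) s.

(* s is a valid run of Greedy Projection with parameter kt (any tie-breaking):
   at each step t the chosen group maximizes ||v_G||_2 among the groups not yet
   selected. The run has min(kt, M) steps (the algorithm cannot continue once
   all groups are selected). *)
Definition greedy_run (R : realType) (p M : nat) (G : 'I_M -> {set 'I_p})
  (g : 'I_p -> R) (kt : nat) (s : seq 'I_M) : Prop :=
  size s = minn kt M /\ uniq s /\
  forall t, (t < size s)%N ->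
    let v := (greedy_state G g (take t s)).2 in
    forall i : 'I_M, i \notin take t s ->
      Num.sqrt (sqnorm (restr (G i) v))
        <= Num.sqrt (sqnorm (restr (G (nth i s t)) v)).

Definition greedy_output (R : realType) (p M : nat) (G : 'I_M -> {set 'I_p})
  (g : 'I_p -> R) (s : seq 'I_M) : 'I_p -> R :=
  (greedy_state G g s).1.

From HB Require Import structures.
From mathcomp Require Import all_boot all_order all_algebra.
From mathcomp Require Import reals sequences exp.
From mathcomp Require Import ring lra.

Set Implicit Arguments.
Unset Strict Implicit.
Unset Printing Implicit Defensive.
Import Order.TTheory GRing.Theory Num.Theory.
Local Open Scope ring_scope.

(* Let S = supp u*, C = ||g_{~S}||^2 <= ||u* - g||^2, and let v_t be the
   residual after t greedy steps. Since u* is k-group-sparse, S is covered by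
   k groups, so ||v_t||^2 - C <= ||(v_t)_S||^2 is at most k times the energy
   removed by the greedy step. Hence x_t = ||v_t||^2 - C contracts by the
   factor 1 - 1/k at every step, x_0 = ||g_S||^2, and (1 - 1/k)^kt <= e^(-kt/k).
   If the run stops early, every group is selected and the residual vanishes. *)

Section SquaredNorm.
Variables (R : realType) (p : nat).
Implicit Types (v w : 'I_p -> R) (A : {set 'I_p}).

Lemma sqnorm_ge0 v : 0 <= sqnorm v.
Proof. by apply: sumr_ge0 => j _; apply: sqr_ge0. Qed.

Lemma ler_sqnorm v w : (forall j, v j ^+ 2 <= w j ^+ 2) -> sqnorm v <= sqnorm w.
Proof. by move=> vw; apply: ler_sum => j _. Qed.

Lemma sqnorm_restrC v A :
  sqnorm v = sqnorm (restr A v) + sqnorm (restr (~: A) v).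
Proof.
rewrite /sqnorm -big_split; apply: eq_bigr => j _; rewrite /restr inE.
by case: (j \in A) => /=; ring.
Qed.

Lemma sqnorm_sub_restr v A :
  sqnorm (fun j => v j - restr A v j) = sqnorm v - sqnorm (restr A v).
Proof.
rewrite /sqnorm -sumrB; apply: eq_bigr => j _; rewrite /restr.
by case: ifP => _; ring.
Qed.

Lemma sqnorm_restr_bigcup (M : nat) (G : 'I_M -> {set 'I_p}) (K : {set 'I_M}) v A :
  A \subset \bigcup_(i in K) G i ->
  sqnorm (restr A v) <= \sum_(i in K) sqnorm (restr (G i) v).
Proof.
move=> AK; rewrite /sqnorm exchange_big /=; apply: ler_sum => j _.
have sum_ge0 : 0 <= \sum_(i in K) restr (G i) v j ^+ 2.
  by apply: sumr_ge0 => i _; apply: sqr_ge0.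
rewrite {1}/restr; case: ifPn => jA; last by rewrite expr0n.
have /bigcupP [i iK jG] := subsetP AK j jA.
by rewrite (bigD1 i) //= {1}/restr jG lerDl; apply: sumr_ge0 => *; apply: sqr_ge0.
Qed.

End SquaredNorm.

Lemma subr1_invn_ge0 (R : numFieldType) (k : nat) : (0 < k)%N ->
  0 <= 1 - k%:R^-1 :> R.
Proof.
by move=> k_gt0; rewrite subr_ge0 invr_le1 ?unitfE ?pnatr_eq0 -?lt0n ?ler1n ?ltr0n.
Qed.

Lemma expr_subr1Vn_le_expR (R : realType) (k n : nat) : (0 < k)%N ->
  (1 - k%:R^-1) ^+ n <= expR (- (n%:R / k%:R)) :> R.
Proof.
move=> k_gt0; have c_ge0 : 0 <= 1 - k%:R^-1 :> R by apply: subr1_invn_ge0.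
have -> : - (n%:R / k%:R) = - k%:R^-1 * n%:R :> R by ring.
rewrite expRM_natr; apply: lerXn2r; rewrite ?nnegrE ?expR_ge0 //.
exact: expR_ge1Dx.
Qed.

Section GreedyProjection.
Variables (R : realType) (p M : nat) (G : 'I_M -> {set 'I_p}) (g : 'I_p -> R).
Implicit Types (r s : seq 'I_M).

Local Notation residual r := (greedy_state G g r).2.

Lemma greedy_state_rcons r i :
  greedy_state G g (rcons r i) = greedy_step G (greedy_state G g r) i.
Proof. by rewrite /greedy_state foldl_rcons. Qed.

Lemma greedy_residual_rcons r i :
  residual (rcons r i) = fun j => residual r j - restr (G i) (residual r) j.
Proof. by rewrite greedy_state_rcons /greedy_step; case: greedy_state. Qed.

Lemma greedy_state_add r j : (greedy_state G g r).1 j + residual r j = g j.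
Proof.
elim/last_ind: r => [|r i IH] /=; first by rewrite add0r.
rewrite greedy_state_rcons /greedy_step.
by case: greedy_state IH => u v /= <-; rewrite /restr; case: ifP => _; ring.
Qed.

Lemma greedy_residual_sqr_le r j : residual r j ^+ 2 <= g j ^+ 2.
Proof.
elim/last_ind: r => [|r i IH] //=; rewrite greedy_residual_rcons /restr.
by case: ifP => _; rewrite ?subrr ?expr0n ?sqr_ge0 ?subr0.
Qed.

Lemma greedy_residual_selected r i j : i \in r -> j \in G i -> residual r j = 0.
Proof.
elim/last_ind: r => [|r i' IH] //; rewrite greedy_residual_rcons mem_rcons inE.
case/orP => [/eqP <- jG | ir jG]; first by rewrite /restr jG subrr.
by rewrite /restr IH //; case: ifP => _; rewrite ?subrr ?subr0.
Qed.

Lemma greedy_output_error s :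
  sqnorm (fun j => greedy_output G g s j - g j) = sqnorm (residual s).
Proof.
apply: eq_bigr => j _; rewrite /greedy_output -(greedy_state_add s j).
by rewrite opprD addrA subrr add0r sqrrN.
Qed.

Lemma greedy_residual_all_selected s :
  \bigcup_(i < M) G i = [set: 'I_p] -> (forall i, i \in s) ->
  sqnorm (residual s) = 0.
Proof.
move=> cover sel; rewrite /sqnorm big1 // => j _.
have /bigcupP [i _ jG] : j \in \bigcup_(i < M) G i by rewrite cover inE.
by rewrite (greedy_residual_selected (sel i) jG) expr0n.
Qed.

Lemma greedy_run_all_selected kt s :
  greedy_run G g kt s -> (M < kt)%N -> forall i, i \in s.
Proof.
move=> [size_s [uniq_s _]] ltMkt i; apply/negPn/negP => i_notin_s.
have /card_uniqP : uniq (i :: s) by rewrite /= i_notin_s.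
rewrite /= size_s (minn_idPr (ltnW ltMkt)) => card_is.
by have := max_card (mem (i :: s)); rewrite card_is card_ord ltnn.
Qed.

(* Groups already selected carry no residual energy, so the greedy choice
   maximises over all groups. *)
Lemma greedy_run_choice kt s t (x0 i : 'I_M) :
  greedy_run G g kt s -> (t < size s)%N ->
  sqnorm (restr (G i) (residual (take t s)))
    <= sqnorm (restr (G (nth x0 s t)) (residual (take t s))).
Proof.
move=> [_ [_ choice]] ts; case: (boolP (i \in take t s)) => [isel | inew].
  rewrite {1}/sqnorm big1 ?sqnorm_ge0 // => j _; rewrite /restr.
  by case: ifP => jG; rewrite ?(greedy_residual_selected isel jG) expr0n.
by rewrite -ler_sqrt ?sqnorm_ge0 // (set_nth_default i) //; apply: choice.
Qed.

Section Decay.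
Variables (kt k : nat) (s : seq 'I_M) (S : {set 'I_p}) (K : {set 'I_M}).
Hypotheses (run : greedy_run G g kt s) (k_gt0 : (0 < k)%N).
Hypotheses (card_K : (#|K| <= k)%N) (S_cover : S \subset \bigcup_(i in K) G i).

Local Notation C := (sqnorm (restr (~: S) g)).

Lemma greedy_residual_decay t : (t < size s)%N ->
  sqnorm (residual (take t.+1 s)) - C
    <= (1 - k%:R^-1) * (sqnorm (residual (take t s)) - C).
Proof.
move=> ts; have [x0 _] : exists x0 : 'I_M, true.
  by case: (s) ts => [|x0 ?] //; exists x0.
set v := residual (take t s); set m := sqnorm (restr (G (nth x0 s t)) v).
rewrite (take_nth x0 ts) greedy_residual_rcons sqnorm_sub_restr -/m.
have C_ge : sqnorm (restr (~: S) v) <= C.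
  apply: ler_sqnorm => j; rewrite /restr.
  by case: ifP => _; rewrite ?greedy_residual_sqr_le.
have S_le : sqnorm (restr S v) <= k%:R * m.
  have greedy_max : \sum_(i in K) sqnorm (restr (G i) v) <= \sum_(i in K) m.
    by apply: ler_sum => i _; exact: greedy_run_choice run ts.
  rewrite (le_trans (sqnorm_restr_bigcup v S_cover)) // (le_trans greedy_max) //.
  by rewrite sumr_const -[m *+ _]mulr_natl ler_wpM2r ?sqnorm_ge0 ?ler_nat.
have k_pos : (0 : R) < k%:R by rewrite ltr0n.
have m_ge : (sqnorm v - C) / k%:R <= m.
  rewrite ler_pdivrMr // mulrC; move: S_le C_ge.
  rewrite (sqnorm_restrC v S); lra.
have -> : (1 - k%:R^-1) * (sqnorm v - C) = sqnorm v - C - (sqnorm v - C) / k%:R.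
  by field; rewrite pnatr_eq0 -lt0n.
lra.
Qed.

Lemma greedy_residual_bound t : (t <= size s)%N ->
  sqnorm (residual (take t s)) - C <= (1 - k%:R^-1) ^+ t * sqnorm (restr S g).
Proof.
have c_ge0 : 0 <= 1 - k%:R^-1 :> R by apply: subr1_invn_ge0.
elim: t => [_ | t IH ts].
  by rewrite take0 expr0 mul1r (sqnorm_restrC g S) addrK.
apply: le_trans (greedy_residual_decay ts) _.
by rewrite exprS -mulrA ler_wpM2l // IH // ltnW.
Qed.

End Decay.

Lemma group_l0_supp_cover (w : 'I_p -> R) k : group_l0_le G w k ->
  exists2 K : {set 'I_M}, (#|K| <= k)%N & supp w \subset \bigcup_(i in K) G i.
Proof.
move=> [a [a_supp [w_sum card_a]]]; exists [set i | [exists j, a i j != 0]] => //.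
apply/subsetP => j; rewrite inE => wj_neq0.
have [i _ aij_neq0] : exists2 i, true & a i j != 0.
  apply/exists_inP; apply: contraNT wj_neq0 => /exists_inPn a0.
  by rewrite w_sum big1 // => i _; apply/eqP/negbNE/a0.
apply/bigcupP; exists i; first by rewrite inE; apply/existsP; exists j.
by apply: contraNT aij_neq0 => /a_supp ->.
Qed.

End GreedyProjection.

Theorem lemma1 (R : realType) (p M : nat) (G : 'I_M -> {set 'I_p})
  (g : 'I_p -> R) (kt k : nat) (s : seq 'I_M) (ustar : 'I_p -> R) :
  \bigcup_(i < M) G i = [set: 'I_p] ->
  (0 < kt)%N -> (0 < k)%N ->
  greedy_run G g kt s ->
  is_group_proj G k g ustar ->
  sqnorm (fun j => greedy_output G g s j - g j)
    <= expR (- (kt%:R / k%:R)) * sqnorm (restr (supp ustar) g)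
       + sqnorm (fun j => ustar j - g j).
Proof.
move=> cover _ k_gt0 run [/group_l0_supp_cover [K card_K S_cover] _].
set S := supp ustar; rewrite greedy_output_error.
have C_le : sqnorm (restr (~: S) g) <= sqnorm (fun j => ustar j - g j).
  apply: ler_sqnorm => j; rewrite /restr !inE negbK.
  by case: eqP => [-> | _]; rewrite ?sub0r ?sqrrN // expr0n sqr_ge0.
have A_ge0 := sqnorm_ge0 (restr S g).
have [leMkt | ltMkt] := leqP kt M.
  have size_s : size s = kt by case: run => -> _; exact: minn_idPl.
  have := greedy_residual_bound run k_gt0 card_K S_cover (leqnn (size s)).
  rewrite take_size size_s lerBlDr => /le_trans; apply; apply: lerD => //.
  by apply: ler_wpM2r => //; apply: expr_subr1Vn_le_expR.
rewrite (greedy_residual_all_selected g cover (greedy_run_all_selected run ltMkt)).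
by rewrite addr_ge0 ?mulr_ge0 ?expR_ge0 ?sqnorm_ge0.
Qed.
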